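(* Let $H$ be a CAT($-1$) space and let $\Phi\in\mathcal{H}$ have Hölder constant $L$ and Hölder exponent $\beta$. Then there exists a function $\hat D:\mathbb{R}_{\geq0}\to\mathbb{R}$, depending only on $L$ and $\beta$, such that for any $p\in H$, any two geodesics $\gamma_1,\gamma_2\in SH$ with $\gamma_1(0)=\gamma_2(0)=p$, and any $T\geq 0$, $r\geq0$ with $d(\gamma_1(T),\gamma_2(T))\leq r$, we have $|d^\Phi(p,\gamma_1(T))-d^\Phi(p,\gamma_2(T))|\leq\hat D(r)$.
   Context: $SH$ is the space of unit speed bi-infinite geodesics $\gamma:\mathbb{R}\to H$ with metric $\operatorname{dist}(\gamma_1,\gamma_2)=\frac12\int_{-\infty}^{\infty}d(\gamma_1(t),\gamma_2(t))e^{-|t|}dt$ and geodesic flow $\mathsf g^t\gamma(s)=\gamma(s+t)$; every geodesic segment is assumed to extend to a bi-infinite geodesic. $\mathcal{H}$ is the set of bounded Hölder functions $\Phi:(SH,\operatorname{dist})\to\mathbb{R}$ with $\Phi(\gamma_1)=\Phi(\gamma_2)$ whenever $\gamma_1|_{[0,\epsilon]}=\gamma_2|_{[0,\epsilon]}$ for some $\epsilon>0$. For $p\neq q$, $d^\Phi(p,q)=\int_0^{d(p,q)}\Phi(\mathsf g^t\gamma_{p,q})dt$ where $\gamma_{p,q}\in SH$ is any geodesic with $\gamma_{p,q}(0)=p$, $\gamma_{p,q}(d(p,q))=q$ (and $d^\Phi(p,p)=0$). *)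

From Stdlib Require Import Reals Lra ClassicalEpsilon.
From Coquelicot Require Import Coquelicot.
Open Scope R_scope.
Set Implicit Arguments.

Section Defs.
Variable H : Type.
Variable d : H -> H -> R.

Definition is_metric : Prop :=
  (forall x y, d x y = 0 <-> x = y) /\
  (forall x y, d x y = d y x) /\
  (forall x y z, d x z <= d x y + d y z).

Definition geod_seg (c : R -> H) (a b : R) : Prop :=
  forall s t, a <= s <= b -> a <= t <= b -> d (c s) (c t) = Rabs (s - t).

Definition geodesic_space : Prop :=
  forall x y, exists c : R -> H, c 0 = x /\ c (d x y) = y /\ geod_seg c 0 (d x y).

(* CAT(-1): for every geodesic triangle with vertex x and opposite side a
   geodesic segment c from y = c 0 to z = c a, and every point c t of that side,
   d(x, c t) is at most the corresponding distance in the comparison triangle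
   in the hyperbolic plane H^2, which (hyperbolic Stewart formula) is given by
   cosh dbar * sinh a = cosh (d x y) * sinh (a - t) + cosh (d x z) * sinh t. *)
Definition CAT_m1 : Prop :=
  is_metric /\ geodesic_space /\
  forall (x : H) (c : R -> H) (a t : R), 0 <= a -> geod_seg c 0 a -> 0 <= t <= a ->
    cosh (d x (c t)) * sinh a <=
      cosh (d x (c 0)) * sinh (a - t) + cosh (d x (c a)) * sinh t.

Record SH := mkSH { geo :> R -> H; geoP : forall s t, d (geo s) (geo t) = Rabs (s - t) }.

Definition geodesically_complete : Prop :=
  forall (c : R -> H) (a b : R), a <= b -> geod_seg c a b ->
    exists g : SH, forall s, a <= s <= b -> g s = c s.

Lemma flow_proof (t : R) (g : SH) :
  forall s u, d (g (s + t)) (g (u + t)) = Rabs (s - u).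
Proof. intros s u. rewrite geoP. f_equal. ring. Qed.

Definition flow (t : R) (g : SH) : SH := mkSH (fun s => g (s + t)) (flow_proof t g).

(* dist(g1,g2) = 1/2 int_{-oo}^{oo} d(g1 t, g2 t) e^{-|t|} dt,
   the improper integral of a nonnegative integrand as limit of integrals over [-n,n] *)
Definition distSH (g1 g2 : SH) : R :=
  / 2 * real (Lim_seq (fun n : nat =>
      RInt (fun t => d (g1 t) (g2 t) * exp (- Rabs t)) (- INR n) (INR n))).

(* x^b for x >= 0 (with 0^b = 0 for b > 0) *)
Definition hpow (x b : R) : R := if Rle_dec x 0 then 0 else Rpower x b.

Definition Hoelder (Phi : SH -> R) (L b : R) : Prop :=
  forall g1 g2, Rabs (Phi g1 - Phi g2) <= L * hpow (distSH g1 g2) b.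

(* the class \mathcal H (Hoelder part recorded separately via Hoelder) *)
Definition in_calH (Phi : SH -> R) : Prop :=
  (exists M, forall g, Rabs (Phi g) <= M) /\
  (exists L b, 0 < b <= 1 /\ Hoelder Phi L b) /\
  (forall g1 g2 : SH, forall eps, 0 < eps ->
     (forall t, 0 <= t <= eps -> g1 t = g2 t) -> Phi g1 = Phi g2).

Definition dPhi (Phi : SH -> R) (p q : H) : R :=
  epsilon (inhabits 0) (fun v =>
    (p = q /\ v = 0) \/
    (p <> q /\ exists g : SH, g 0 = p /\ g (d p q) = q /\
        v = RInt (fun t => Phi (flow t g)) 0 (d p q))).

End Defs.

From Stdlib Require Import Reals Lra ClassicalEpsilon.
From Coquelicot Require Import Coquelicot.
Open Scope R_scope.
Set Implicit Arguments.

(* Two geodesics from p whose points at time T are r-close stay exponentially close before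
   time T: the CAT(-1) comparison, applied twice, gives d(g1 u, g2 u) <= 8 cosh r e^(u-T) for
   0 <= u <= T, and the triangle inequality handles u outside [0, T].  Hence the flowed geodesics
   g^t g1 and g^t g2 are at distance O(e^(-(T-t)/2) + e^(-t/2)) in SH, so by Hoelder continuity
   the integrands defining d^Phi differ by O(e^(-beta (T-t)/2) + e^(-beta t/2)), whose integral
   over [0, T] is bounded independently of T. *)

Lemma exp_le_compat x y : x <= y -> exp x <= exp y.
Proof. intros [Hlt|<-]; [now left; apply exp_increasing | apply Rle_refl]. Qed.

Lemma exp_ge_1 x : 0 <= x -> 1 <= exp x.
Proof. intros. pose proof (exp_ineq1_le x). lra. Qed.

Lemma continuous_of_eps_delta (f : R -> R) x :
  (forall eps, 0 < eps -> exists delta, 0 < delta /\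
     forall y, Rabs (y - x) < delta -> Rabs (f y - f x) < eps) ->
  continuous f x.
Proof.
  intros Hf. apply continuity_pt_filterlim, continuity_pt_locally. intros eps.
  destruct (Hf eps (cond_pos eps)) as (delta & Hdelta & Hy).
  exists (mkposreal delta Hdelta). exact Hy.
Qed.

Lemma cosh_le_compat x y : 0 <= x <= y -> cosh x <= cosh y.
Proof.
  intros [Hx Hxy]. unfold cosh. rewrite !exp_Ropp.
  pose proof (exp_ge_1 Hx). pose proof (exp_le_compat Hxy).
  set (X := exp x) in *. set (Y := exp y) in *.
  assert (Y + / Y - (X + / X) = (Y - X) * (X * Y - 1) / (X * Y)) by (field; lra).
  assert (0 <= (Y - X) * (X * Y - 1) / (X * Y))
    by (apply Rdiv_le_0_compat; [apply Rmult_le_pos|]; nra).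
  lra.
Qed.

Lemma cosh_ge_1 x : 0 <= x -> 1 <= cosh x.
Proof. intros. rewrite <- cosh_0. apply cosh_le_compat. lra. Qed.

Lemma sinh_pos x : 0 < x -> 0 < sinh x.
Proof. intros. rewrite <- sinh_0. now apply sinh_lt. Qed.

Lemma sinh_nonneg x : 0 <= x -> 0 <= sinh x.
Proof. intros [Hx|<-]; [now left; apply sinh_pos | rewrite sinh_0; lra]. Qed.

Lemma sqr_le_cosh x : 0 <= x -> x * x <= 8 * (cosh x - 1).
Proof.
  intros Hx. unfold cosh.
  assert (E1 : exp x = exp (x/2) * exp (x/2)) by (rewrite <- exp_plus; f_equal; field).
  assert (E2 : exp (-x) = / exp (x/2) * / exp (x/2))
    by (rewrite <- !exp_Ropp, <- exp_plus; f_equal; field).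
  rewrite E1, E2.
  pose proof (exp_ineq1_le (x/2)). set (X := exp (x/2)) in *.
  assert (0 < / X <= 1).
  { split. apply Rinv_0_lt_compat; lra. rewrite <- Rinv_1. apply Rinv_le_contravar; lra. }
  assert (X * / X = 1) by (field; lra).
  assert (X * X + / X * / X - 2 = (X - / X) * (X - / X)) by nra.
  nra.
Qed.

Lemma sinh_sub_identity T u :
  cosh u * sinh (T - u) * sinh T + sinh u * (cosh T * sinh (T - u)) + sinh u * sinh u
  = sinh T * sinh T.
Proof.
  unfold cosh, sinh.
  assert (E1 : exp (T - u) = exp T * / exp u) by (rewrite <- exp_Ropp, <- exp_plus; f_equal).
  assert (E2 : exp (- (T - u)) = / exp T * exp u)
    by (rewrite <- exp_Ropp, <- exp_plus; f_equal; ring).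
  rewrite E1, E2, !exp_Ropp.
  assert (0 < exp T) by apply exp_pos. assert (0 < exp u) by apply exp_pos.
  field. lra.
Qed.

Lemma sinh_mul_exp_le T u : 0 <= u <= T -> sinh u * exp T <= sinh T * exp u.
Proof.
  intros [Hu HuT]. unfold sinh. rewrite !exp_Ropp.
  pose proof (exp_ge_1 Hu). pose proof (exp_le_compat HuT).
  set (a := exp T) in *. set (b := exp u) in *.
  assert ((a - / a) / 2 * b - (b - / b) / 2 * a = (a * a - b * b) / (2 * a * b)) by (field; lra).
  assert (0 <= (a * a - b * b) / (2 * a * b)) by (apply Rdiv_le_0_compat; nra).
  lra.
Qed.

(* A smooth majorant of exp (-|s|/2) with closed-form antiderivative 4 atan (exp (s/2)), so the
   weighted integral in [distSH] is bounded without splitting at s = 0. *)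
Definition half_sech (s : R) : R := 2 / (exp (s / 2) + exp (- (s / 2))).

Lemma continuous_half_sech x : continuous half_sech x.
Proof.
  apply (@ex_derive_continuous R_AbsRing R_NormedModule). unfold half_sech. auto_derive.
  pose proof (exp_pos (x / 2)). pose proof (exp_pos (- (x / 2))). lra.
Qed.

Lemma is_RInt_half_sech a b :
  is_RInt half_sech a b (4 * atan (exp (b / 2)) - 4 * atan (exp (a / 2))).
Proof.
  apply (is_RInt_derive (fun s => 4 * atan (exp (s / 2)))).
  - intros x _. auto_derive; [easy|]. unfold half_sech. rewrite exp_Ropp.
    pose proof (exp_pos (x / 2)). unfold Rdiv in *. set (E := exp (x * / 2)) in *.
    field. split; [lra | nra].
  - intros x _. apply continuous_half_sech.
Qed.

Lemma RInt_half_sech_le a b : RInt half_sech a b <= 4 * PI.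
Proof.
  rewrite (is_RInt_unique _ _ _ _ (is_RInt_half_sech a b)).
  pose proof (atan_bound (exp (b / 2))). pose proof (atan_bound (exp (a / 2))). lra.
Qed.

Lemma exp_neg_half_abs_le_half_sech s : exp (- (Rabs s / 2)) <= half_sech s.
Proof.
  unfold half_sech. pose proof (exp_pos (s / 2)). pose proof (exp_pos (- (s / 2))).
  apply Rle_div_r; [lra|]. rewrite Rmult_plus_distr_l, <- !exp_plus.
  assert (exp (- (Rabs s / 2) + s / 2) <= 1).
  { rewrite <- exp_0. apply exp_le_compat. unfold Rabs; destruct Rcase_abs; lra. }
  assert (exp (- (Rabs s / 2) + - (s / 2)) <= 1).
  { rewrite <- exp_0. apply exp_le_compat. unfold Rabs; destruct Rcase_abs; lra. }
  lra.
Qed.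

Lemma RInt_exp_decay_le c1 c2 k T : 0 < k -> 0 <= c1 -> 0 <= c2 ->
  let f := fun t => c1 * exp (k * (t - T)) + c2 * exp (- (k * t)) in
  ex_RInt f 0 T /\ RInt f 0 T <= (c1 + c2) / k.
Proof.
  intros Hk Hc1 Hc2 f.
  set (F := fun t => c1 / k * exp (k * (t - T)) - c2 / k * exp (- (k * t))).
  assert (HF : is_RInt f 0 T (F T - F 0)).
  { apply (is_RInt_derive F f).
    - intros x _. unfold F, f. auto_derive; [easy|]. unfold Rminus, Rdiv. field. lra.
    - intros x _. apply (@ex_derive_continuous R_AbsRing R_NormedModule).
      unfold f. auto_derive. easy. }
  split; [eexists; exact HF|].
  rewrite (is_RInt_unique _ _ _ _ HF).
  replace (F T - F 0) with ((c1 + c2) / k - (c1 + c2) / k * exp (- (k * T))).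
  - assert (0 <= (c1 + c2) / k * exp (- (k * T))).
    { apply Rmult_le_pos; [apply Rdiv_le_0_compat | left; apply exp_pos]; lra. }
    lra.
  - unfold F. replace (k * (T - T)) with 0 by ring.
    replace (k * (0 - T)) with (- (k * T)) by ring. replace (- (k * 0)) with 0 by ring.
    rewrite exp_0. field. lra.
Qed.

Lemma abs_RInt_sub_le (f1 f2 g : R -> R) a b : a <= b ->
  (forall x, continuous f1 x) -> (forall x, continuous f2 x) -> ex_RInt g a b ->
  (forall t, a <= t <= b -> Rabs (f1 t - f2 t) <= g t) ->
  Rabs (RInt f1 a b - RInt f2 a b) <= RInt g a b.
Proof.
  intros Hab C1 C2 Hg Hle.
  assert (Cd : forall x, continuous (fun t => f1 t - f2 t) x).
  { intros x. apply continuity_pt_filterlim, continuity_pt_minus;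
      apply continuity_pt_filterlim; [apply C1 | apply C2]. }
  assert (E : forall f, (forall x, continuous f x) -> ex_RInt f a b)
    by (intros f Cf; apply (ex_RInt_continuous (V := R_CompleteNormedModule)); intros; apply Cf).
  rewrite <- (RInt_minus (V := R_CompleteNormedModule)) by (apply E; assumption).
  apply Rle_trans with (1 := abs_RInt_le _ _ _ Hab (E _ Cd)).
  apply RInt_le; [exact Hab | | exact Hg | intros t Ht; apply Hle; lra].
  apply E. intros x. apply continuous_Rabs_comp, Cd.
Qed.

Lemma real_Lim_seq_le (u : nat -> R) B : 0 <= B -> (forall n, u n <= B) -> real (Lim_seq u) <= B.
Proof.
  intros HB Hu.
  assert (Hl : Rbar_le (Lim_seq u) (Lim_seq (fun _ => B)))
    by (apply Lim_seq_le_loc; exists 0%nat; intros n _; apply Hu).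
  rewrite Lim_seq_const in Hl. destruct (Lim_seq u); simpl in *; lra.
Qed.

Lemma Rpower_pos x b : 0 < Rpower x b.
Proof. apply exp_pos. Qed.

Lemma hpow_nonneg x b : 0 <= hpow x b.
Proof. unfold hpow. destruct Rle_dec; [lra | left; apply Rpower_pos]. Qed.

Lemma hpow_Rpower x b : 0 < x -> hpow x b = Rpower x b.
Proof. intros. unfold hpow. destruct Rle_dec; [lra | reflexivity]. Qed.

Lemma hpow_le_compat x y b : 0 <= b -> x <= y -> hpow x b <= hpow y b.
Proof.
  intros Hb Hxy. unfold hpow.
  destruct (Rle_dec x 0), (Rle_dec y 0); try lra.
  - left; apply Rpower_pos.
  - apply Rle_Rpower_l; lra.
Qed.

Lemma Rpower_ge_self z b : 0 < z <= 1 -> 0 < b <= 1 -> z <= Rpower z b.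
Proof.
  intros Hz Hb. unfold Rpower. rewrite <- (exp_ln z) at 1 by lra. apply exp_le_compat.
  assert (ln z <= 0) by (rewrite <- ln_1; apply ln_le; lra). nra.
Qed.

(* Write x = (x/s) s, y = (y/s) s with s = x + y; then (x/s)^b + (y/s)^b >= x/s + y/s = 1. *)
Lemma hpow_add_le x y b : 0 <= x -> 0 <= y -> 0 < b <= 1 ->
  hpow (x + y) b <= hpow x b + hpow y b.
Proof.
  intros [Hx|<-] [Hy|<-] Hb; rewrite ?Rplus_0_l, ?Rplus_0_r;
    try (pose proof (hpow_nonneg 0 b); lra).
  rewrite !hpow_Rpower by lra.
  set (s := x + y).
  assert (Hs : 0 < s) by (unfold s; lra).
  assert (Hxs : 0 < x / s <= 1).
  { split; [apply Rdiv_lt_0_compat; lra|]. apply (Rdiv_le_1 _ _ Hs); unfold s; lra. }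
  assert (Hys : 0 < y / s <= 1).
  { split; [apply Rdiv_lt_0_compat; lra|]. apply (Rdiv_le_1 _ _ Hs); unfold s; lra. }
  replace x with (x / s * s) at 1 by (field; lra).
  replace y with (y / s * s) at 1 by (field; lra).
  rewrite <- !Rpower_mult_distr by lra.
  pose proof (Rpower_ge_self Hxs Hb). pose proof (Rpower_ge_self Hys Hb).
  assert (x / s + y / s = 1) by (unfold s; field; lra).
  pose proof (Rpower_pos s b). nra.
Qed.

Lemma hpow_mul_exp c z b : 0 < c -> hpow (c * exp z) b = Rpower c b * exp (b * z).
Proof.
  intros Hc. rewrite hpow_Rpower by (pose proof (exp_pos z); nra).
  rewrite <- Rpower_mult_distr by (auto; apply exp_pos).
  unfold Rpower at 2. rewrite ln_exp. reflexivity.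
Qed.

Lemma hpow_small C eps b : 0 <= C -> 0 < eps -> 0 < b ->
  exists delta, 0 < delta /\ forall x, x < delta -> C * hpow x b < eps.
Proof.
  intros HC He Hb. set (y := eps / (C + 1)).
  assert (Hy : 0 < y) by (unfold y; apply Rdiv_lt_0_compat; lra).
  exists (Rpower y (/ b)). split; [apply Rpower_pos|].
  intros x Hx. apply Rle_lt_trans with (C * hpow (Rpower y (/ b)) b).
  { apply Rmult_le_compat_l; [lra|]. apply hpow_le_compat; lra. }
  rewrite hpow_Rpower, Rpower_mult by apply Rpower_pos.
  replace (/ b * b) with 1 by (field; lra). rewrite Rpower_1 by lra.
  unfold y. apply (Rmult_lt_reg_r (C + 1)); [lra|].
  replace (C * (eps / (C + 1)) * (C + 1)) with (C * eps) by (field; lra). nra.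
Qed.

Section Metric.
Variables (H : Type) (d : H -> H -> R).
Hypothesis d_metric : is_metric d.

Lemma dist_sym x y : d x y = d y x.
Proof. apply d_metric. Qed.

Lemma dist_triangle x y z : d x z <= d x y + d y z.
Proof. apply d_metric. Qed.

Lemma dist_self x : d x x = 0.
Proof. now apply d_metric. Qed.

Lemma dist_nonneg x y : 0 <= d x y.
Proof.
  pose proof (dist_triangle x y x). rewrite dist_self, (dist_sym y x) in *. lra.
Qed.

Lemma continuous_dist_geodesics (g1 g2 : SH d) x :
  continuous (fun t => d (g1 t) (g2 t)) x.
Proof.
  apply continuous_of_eps_delta. intros eps Heps. exists (eps / 2). split; [lra|].
  intros y Hy.
  pose proof (dist_triangle (g1 y) (g1 x) (g2 y)).
  pose proof (dist_triangle (g1 x) (g2 x) (g2 y)).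
  pose proof (dist_triangle (g1 x) (g1 y) (g2 x)).
  pose proof (dist_triangle (g1 y) (g2 y) (g2 x)).
  rewrite !geoP, (Rabs_minus_sym x y) in *. apply Rabs_lt_between. lra.
Qed.

Lemma distSH_le (g1 g2 : SH d) M : 0 <= M ->
  (forall s, d (g1 s) (g2 s) <= M * exp (Rabs s / 2)) -> distSH g1 g2 <= 8 * M.
Proof.
  intros HM Hle. unfold distSH.
  set (f := fun t => d (g1 t) (g2 t) * exp (- Rabs t)).
  assert (Cf : forall x, continuous f x).
  { intros x. apply (continuous_mult (K := R_AbsRing)); [apply continuous_dist_geodesics|].
    apply continuous_exp_comp, (continuous_comp Rabs Ropp); [apply continuous_Rabs|].
    apply continuity_pt_filterlim, continuity_pt_opp, continuity_pt_id. }
  cut (real (Lim_seq (fun n : nat => RInt f (- INR n) (INR n))) <= 16 * M); [lra|].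
  apply real_Lim_seq_le; [lra|]. intros n.
  assert (Hn : - INR n <= INR n) by (pose proof (pos_INR n); lra).
  assert (Ew : ex_RInt half_sech (- INR n) (INR n)) by (eexists; apply is_RInt_half_sech).
  apply Rle_trans with (RInt (fun s => M * half_sech s) (- INR n) (INR n)).
  - apply RInt_le; [exact Hn | | | ].
    + apply (ex_RInt_continuous (V := R_CompleteNormedModule)). intros; apply Cf.
    + apply (ex_RInt_scal (V := R_CompleteNormedModule)), Ew.
    + intros s _. unfold f.
      apply Rle_trans with (M * exp (Rabs s / 2) * exp (- Rabs s)).
      { apply Rmult_le_compat_r; [left; apply exp_pos | apply Hle]. }
      rewrite Rmult_assoc, <- exp_plus. apply Rmult_le_compat_l; [exact HM|].
      replace (Rabs s / 2 + - Rabs s) with (- (Rabs s / 2)) by field.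
      apply exp_neg_half_abs_le_half_sech.
  - rewrite (RInt_scal (V := R_CompleteNormedModule)) by exact Ew.
    pose proof (RInt_half_sech_le (- INR n) (INR n)). pose proof PI_4.
    unfold scal; simpl; unfold mult; simpl. nra.
Qed.

Lemma distSH_flow_le (h : SH d) t t' : distSH (flow t h) (flow t' h) <= 8 * Rabs (t - t').
Proof.
  apply distSH_le; [apply Rabs_pos|]. intros s. simpl. rewrite geoP.
  replace (s + t - (s + t')) with (t - t') by ring.
  assert (1 <= exp (Rabs s / 2)) by (apply exp_ge_1; pose proof (Rabs_pos s); lra).
  pose proof (Rabs_pos (t - t')). nra.
Qed.

Lemma Hoelder_abs (Phi : SH d -> R) L b : Hoelder Phi L b ->
  forall g1 g2, Rabs (Phi g1 - Phi g2) <= Rabs L * hpow (distSH g1 g2) b.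
Proof.
  intros HPhi g1 g2. apply Rle_trans with (1 := HPhi g1 g2).
  apply Rmult_le_compat_r; [apply hpow_nonneg | apply Rle_abs].
Qed.

Lemma continuous_Hoelder_flow (Phi : SH d -> R) L b : Hoelder Phi L b -> 0 < b ->
  forall (h : SH d) x, continuous (fun t => Phi (flow t h)) x.
Proof.
  intros HPhi Hb h x. apply continuous_of_eps_delta. intros eps Heps.
  destruct (hpow_small (Rabs_pos L) Heps Hb) as (delta & Hdelta & Hsmall).
  exists (delta / 8). split; [lra|]. intros y Hy.
  apply Rle_lt_trans with (1 := Hoelder_abs HPhi _ _). apply Hsmall.
  pose proof (distSH_flow_le h y x). lra.
Qed.

(* The geodesic chosen by [dPhi] need not be [g] itself, only one with the same endpoints. *)
Lemma dPhi_geodesic (Phi : SH d -> R) (g : SH d) T : 0 < T ->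
  exists h : SH d, h 0 = g 0 /\ h T = g T /\
    dPhi Phi (g 0) (g T) = RInt (fun t => Phi (flow t h)) 0 T.
Proof.
  intros HT.
  assert (HdT : d (g 0) (g T) = T) by (rewrite geoP, Rminus_0_l, Rabs_Ropp, Rabs_right; lra).
  assert (Hne : g 0 <> g T) by (intros E; rewrite E, dist_self in HdT; lra).
  unfold dPhi. rewrite HdT.
  match goal with |- context [epsilon ?i ?P] =>
    assert (Hex : exists v, P v); [|destruct (epsilon_spec i P Hex) as [[E _]|(_ & h & Hh)]] end.
  - exists (RInt (fun t => Phi (flow t g)) 0 T). right. split; [exact Hne|]. exists g. auto.
  - contradiction.
  - exists h. exact Hh.
Qed.

End Metric.

Definition spread (r : R) : R := 8 * cosh r + r + 4.

Definition dPhi_bound (L b r : R) : R :=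
  Rabs L * (Rpower (8 * spread r) b + Rpower 32 b) * (2 / b).

Lemma dPhi_bound_nonneg L b r : 0 < b -> 0 <= dPhi_bound L b r.
Proof.
  intros Hb. unfold dPhi_bound.
  pose proof (Rpower_pos (8 * spread r) b). pose proof (Rpower_pos 32 b).
  apply Rmult_le_pos; [apply Rmult_le_pos; [apply Rabs_pos | lra]|].
  left. apply Rdiv_lt_0_compat; lra.
Qed.

Section CAT.
Variables (H : Type) (d : H -> H -> R).
Hypothesis d_cat : CAT_m1 d.
Variables (h1 h2 : SH d) (T r : R).
Hypotheses (h12_0 : h1 0 = h2 0) (T_pos : 0 < T) (dist_T_le : d (h1 T) (h2 T) <= r).

Let d_metric : is_metric d := proj1 d_cat.

Lemma r_nonneg : 0 <= r.
Proof. pose proof (dist_nonneg d_metric (h1 T) (h2 T)). lra. Qed.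

Lemma spread_pos : 0 < spread r.
Proof. pose proof r_nonneg. pose proof (cosh_ge_1 r_nonneg). unfold spread. lra. Qed.

(* CAT(-1) comparison in the triangle (h2 T, h1 0, h1 T) bounds d(h1 u, h2 T); fed into the
   comparison in the triangle (h1 u, h2 0, h2 T), the hyperbolic identity [sinh_sub_identity]
   collapses the result. *)
Lemma cosh_dist_geodesics_le u : 0 <= u <= T ->
  cosh (d (h1 u) (h2 u)) * (sinh T * sinh T)
  <= sinh T * sinh T + (cosh r - 1) * (sinh u * sinh u).
Proof.
  intros Hu. pose proof d_cat as (_ & _ & Hcmp).
  pose proof (Hcmp (h2 T) h1 T u (Rlt_le _ _ T_pos) (fun s t _ _ => geoP h1 s t) Hu) as S1.
  pose proof (Hcmp (h1 u) h2 T u (Rlt_le _ _ T_pos) (fun s t _ _ => geoP h2 s t) Hu) as S2.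
  rewrite <- h12_0, geoP in S2.
  rewrite (dist_sym d_metric (h2 T) (h1 0)), h12_0, geoP,
    (dist_sym d_metric (h2 T) (h1 u)), (dist_sym d_metric (h2 T) (h1 T)) in S1.
  replace (Rabs (u - 0)) with u in S2 by (rewrite Rminus_0_r, Rabs_right; lra).
  replace (Rabs (0 - T)) with T in S1 by (rewrite Rminus_0_l, Rabs_Ropp, Rabs_right; lra).
  assert (Hr : cosh (d (h1 T) (h2 T)) <= cosh r)
    by (apply cosh_le_compat; split; [apply (dist_nonneg d_metric) | exact dist_T_le]).
  pose proof (sinh_pos T_pos).
  assert (0 <= sinh u) by (apply sinh_nonneg; lra).
  assert (0 <= sinh (T - u)) by (apply sinh_nonneg; lra).
  pose proof (sinh_sub_identity T u).
  set (A := cosh (d (h1 u) (h2 T))) in *.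
  assert (S1' : A * sinh T <= cosh T * sinh (T - u) + cosh r * sinh u).
  { apply Rle_trans with (1 := S1). apply Rplus_le_compat_l, Rmult_le_compat_r; lra. }
  assert (cosh (d (h1 u) (h2 u)) * sinh T * sinh T
          <= (cosh u * sinh (T - u) + A * sinh u) * sinh T)
    by (apply Rmult_le_compat_r; lra).
  assert (A * sinh T * sinh u <= (cosh T * sinh (T - u) + cosh r * sinh u) * sinh u)
    by (apply Rmult_le_compat_r; lra).
  nra.
Qed.

Lemma dist_geodesics_le u : 0 <= u <= T -> d (h1 u) (h2 u) <= 8 * cosh r * exp (u - T).
Proof.
  intros Hu. set (D := d (h1 u) (h2 u)).
  assert (HD : 0 <= D) by apply (dist_nonneg d_metric).
  pose proof (cosh_ge_1 r_nonneg). pose proof (sinh_pos T_pos).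
  assert (0 <= sinh u) by (apply sinh_nonneg; lra).
  set (q := exp (u - T)).
  assert (Hq : 0 < q) by apply exp_pos.
  assert (Hsinh : sinh u <= sinh T * q).
  { unfold q, Rminus. rewrite exp_plus, exp_Ropp.
    apply (Rmult_le_reg_r (exp T)); [apply exp_pos|].
    replace (sinh T * (exp u * / exp T) * exp T) with (sinh T * exp u)
      by (field; pose proof (exp_pos T); lra).
    now apply sinh_mul_exp_le. }
  assert (Hcosh : cosh D - 1 <= (cosh r - 1) * (q * q)).
  { apply (Rmult_le_reg_r (sinh T * sinh T)); [nra|].
    pose proof (cosh_dist_geodesics_le Hu) as Hcmp. fold D in Hcmp.
    assert (sinh u * sinh u <= sinh T * q * (sinh T * q)) by nra.
    assert ((cosh r - 1) * (sinh u * sinh u) <= (cosh r - 1) * (sinh T * q * (sinh T * q)))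
      by (apply Rmult_le_compat_l; lra).
    nra. }
  pose proof (sqr_le_cosh HD).
  apply Rsqr_incr_0_var; [unfold Rsqr|nra].
  nra.
Qed.

Lemma dist_geodesics_le_spread u :
  d (h1 u) (h2 u) <= spread r * exp ((u - T) / 2) + 4 * exp (- u / 2).
Proof.
  unfold spread. pose proof r_nonneg. pose proof (cosh_ge_1 r_nonneg).
  pose proof (exp_pos ((u - T) / 2)). pose proof (exp_pos (- u / 2)).
  destruct (Rle_or_lt 0 u) as [Hu0|Hu0]; [destruct (Rle_or_lt u T) as [HuT|HuT]|].
  - pose proof (dist_geodesics_le (conj Hu0 HuT)).
    assert (exp (u - T) <= exp ((u - T) / 2)) by (apply exp_le_compat; lra).
    assert (8 * cosh r * exp (u - T) <= 8 * cosh r * exp ((u - T) / 2))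
      by (apply Rmult_le_compat_l; lra).
    nra.
  - pose proof (dist_triangle d_metric (h1 u) (h1 T) (h2 u)) as E1.
    pose proof (dist_triangle d_metric (h1 T) (h2 T) (h2 u)) as E2.
    rewrite geoP, Rabs_right in E1 by lra. rewrite geoP, Rabs_left1 in E2 by lra.
    pose proof (exp_ineq1_le ((u - T) / 2)).
    assert (r <= r * exp ((u - T) / 2)) by (pose proof (exp_ge_1 (x := (u - T) / 2)); nra).
    nra.
  - pose proof (dist_triangle d_metric (h1 u) (h1 0) (h2 u)) as E.
    rewrite (geoP h1 u 0), h12_0, geoP, Rabs_left, Rabs_right in E by lra.
    pose proof (exp_ineq1_le (- u / 2)).
    nra.
Qed.

Lemma distSH_flow_geodesics_le t :
  distSH (flow t h1) (flow t h2) <= 8 * (spread r * exp ((t - T) / 2) + 4 * exp (- t / 2)).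
Proof.
  pose proof spread_pos.
  pose proof (exp_pos ((t - T) / 2)). pose proof (exp_pos (- t / 2)).
  apply (distSH_le d_metric); [nra|]. intros s. simpl.
  apply Rle_trans with (1 := dist_geodesics_le_spread (s + t)).
  replace ((s + t - T) / 2) with ((t - T) / 2 + s / 2) by field.
  replace (- (s + t) / 2) with (- t / 2 + - s / 2) by field.
  rewrite !exp_plus.
  assert (exp (s / 2) <= exp (Rabs s / 2))
    by (apply exp_le_compat; unfold Rabs; destruct Rcase_abs; lra).
  assert (exp (- s / 2) <= exp (Rabs s / 2))
    by (apply exp_le_compat; unfold Rabs; destruct Rcase_abs; lra).
  assert (0 <= spread r * exp ((t - T) / 2)) by nra.
  assert (0 <= 4 * exp (- t / 2)) by nra.
  nra.
Qed.

Lemma Hoelder_flow_geodesics_le (Phi : SH d -> R) L b : Hoelder Phi L b -> 0 < b <= 1 ->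
  forall t, Rabs (Phi (flow t h1) - Phi (flow t h2))
  <= Rabs L * Rpower (8 * spread r) b * exp (b / 2 * (t - T))
     + Rabs L * Rpower 32 b * exp (- (b / 2 * t)).
Proof.
  intros HPhi Hb t. pose proof spread_pos.
  apply Rle_trans with (1 := Hoelder_abs HPhi _ _).
  rewrite !Rmult_assoc, <- Rmult_plus_distr_l.
  apply Rmult_le_compat_l; [apply Rabs_pos|].
  assert (Hx : 0 <= 8 * spread r * exp ((t - T) / 2))
    by (pose proof (exp_pos ((t - T) / 2)); nra).
  assert (Hy : 0 <= 32 * exp (- t / 2)) by (pose proof (exp_pos (- t / 2)); lra).
  apply Rle_trans with (hpow (8 * spread r * exp ((t - T) / 2) + 32 * exp (- t / 2)) b).
  { apply hpow_le_compat; [lra|]. pose proof (distSH_flow_geodesics_le t). lra. }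
  apply Rle_trans with (1 := hpow_add_le Hx Hy Hb).
  rewrite !hpow_mul_exp by lra.
  replace (b * ((t - T) / 2)) with (b / 2 * (t - T)) by field.
  replace (b * (- t / 2)) with (- (b / 2 * t)) by field.
  lra.
Qed.

Lemma RInt_flow_geodesics_diff_le (Phi : SH d -> R) L b : Hoelder Phi L b -> 0 < b <= 1 ->
  Rabs (RInt (fun t => Phi (flow t h1)) 0 T - RInt (fun t => Phi (flow t h2)) 0 T)
  <= dPhi_bound L b r.
Proof.
  intros HPhi Hb.
  set (c1 := Rabs L * Rpower (8 * spread r) b). set (c2 := Rabs L * Rpower 32 b).
  assert (Hc1 : 0 <= c1) by (apply Rmult_le_pos; [apply Rabs_pos | left; apply Rpower_pos]).
  assert (Hc2 : 0 <= c2) by (apply Rmult_le_pos; [apply Rabs_pos | left; apply Rpower_pos]).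
  destruct (RInt_exp_decay_le T (k := b / 2) ltac:(lra) Hc1 Hc2) as [Hex Hle].
  replace (dPhi_bound L b r) with ((c1 + c2) / (b / 2))
    by (unfold dPhi_bound, c1, c2; field; lra).
  apply Rle_trans with (2 := Hle).
  apply abs_RInt_sub_le; [lra | | | exact Hex | ].
  - intros x. apply (continuous_Hoelder_flow d_metric HPhi). lra.
  - intros x. apply (continuous_Hoelder_flow d_metric HPhi). lra.
  - intros t _. apply (Hoelder_flow_geodesics_le HPhi Hb).
Qed.

End CAT.

Theorem lemma4p2 :
  forall L beta : R, 0 < beta -> beta <= 1 ->
  exists Dhat : R -> R,
  forall (H : Type) (d : H -> H -> R),
    CAT_m1 d -> geodesically_complete d ->
  forall Phi : SH d -> R,
    in_calH Phi -> Hoelder Phi L beta ->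
  forall (p : H) (g1 g2 : SH d) (T r : R),
    g1 0 = p -> g2 0 = p -> 0 <= T -> 0 <= r ->
    d (g1 T) (g2 T) <= r ->
    Rabs (dPhi Phi p (g1 T) - dPhi Phi p (g2 T)) <= Dhat r.
Proof.
  intros L beta Hb0 Hb1. exists (dPhi_bound L beta).
  intros H d Hcat _ Phi _ HPhi p g1 g2 T r <- Hg2 HT _ HdT.
  destruct HT as [HT | <-].
  - destruct (dPhi_geodesic (proj1 Hcat) Phi g1 HT) as (h1 & E10 & E1T & ->).
    rewrite <- Hg2.
    destruct (dPhi_geodesic (proj1 Hcat) Phi g2 HT) as (h2 & E20 & E2T & ->).
    apply (RInt_flow_geodesics_diff_le Hcat);
      [congruence | exact HT | congruence | exact HPhi | lra].
  - rewrite Hg2, Rminus_diag, Rabs_R0. now apply dPhi_bound_nonneg.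
Qed.
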